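(* Let $C=L_1;\ldots;L_d$ be a sorting network of depth $d\ge2$ on $n$ channels containing no redundant comparators. Then every comparator $(i,j)\in L_{d-1}$ satisfies $j-i\le3$. Furthermore, if $j=i+2$ then $(i,i+1)\in L_d$ or $(i+1,i+2)\in L_d$; and if $j=i+3$ then both $(i,i+1)\in L_d$ and $(i+2,i+3)\in L_d$.
   Context: Channels are numbered $1,\ldots,n$. A comparator network of depth $d$ is a sequence $C=L_1;\ldots;L_d$ of layers; each layer is a set of comparators $(i,j)$ with $1\le i<j\le n$, each channel occurring in at most one comparator of a layer. An input $\bar x\in\{0,1\}^n$ propagates: $\bar x_0=\bar x$, and $\bar x_k$ is obtained from $\bar x_{k-1}$ by, for each $(i,j)\in L_k$, putting the minimum of the values at positions $i,j$ at position $i$ and the maximum at position $j$. The output is $C(\bar x)=\bar x_d$; $C$ is a sorting network if $C(\bar x)$ is sorted non-decreasingly for all $\bar x\in\{0,1\}^n$. A comparator $(i,j)\in L_\ell$ is redundant if for every input $\bar x$ we have $(\bar x_{\ell-1})_i\le(\bar x_{\ell-1})_j$. *)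

(* Channels are 1..n as in the paper; comparators are pairs (i,j). *)
From mathcomp Require Import all_boot.
Set Implicit Arguments. Unset Strict Implicit. Unset Printing Implicit Defensive.

Definition comparator := (nat * nat)%type.
Definition layer := seq comparator.
Definition network := seq layer.

Definition valid_layer (n : nat) (L : layer) : Prop :=
  (forall c, c \in L -> 1 <= c.1 /\ c.1 < c.2 /\ c.2 <= n) /\
  uniq (flatten [seq [:: c.1; c.2] | c <- L]).

Definition valid_network (n : nat) (C : network) : Prop :=
  forall L, L \in C -> valid_layer n L.

Definition state := nat -> bool.

(* apply one comparator: min (= &&) goes to i, max (= ||) goes to j *)
Definition apply_cmp (c : comparator) (x : state) : state :=
  fun k => if k == c.1 then x c.1 && x c.2
           else if k == c.2 then x c.1 || x c.2 else x k.

(* apply a layer; since channels are disjoint, applying comparators in sequence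
   is the same as applying them in parallel *)
Definition apply_layer (x : state) (L : layer) : state := foldl (fun y c => apply_cmp c y) x L.

Definition input_state (n : nat) (x : n.-tuple bool) : state :=
  fun k => nth false x k.-1.

Definition after (C : network) (k : nat) (x : state) : state := foldl apply_layer x (take k C).

Definition output (C : network) (x : state) : state := after C (size C) x.

(* layer L_l (1-based) *)
Definition layer_at (C : network) (l : nat) : layer := nth [::] C l.-1.

Definition is_sorting_network (n : nat) (C : network) : Prop :=
  forall x : n.-tuple bool, forall k, 1 <= k -> k < n ->
    output C (input_state x) k <= output C (input_state x) k.+1.

Definition redundant (n : nat) (C : network) (l : nat) (c : comparator) : Prop :=
  forall x : n.-tuple bool,
    after C l.-1 (input_state x) c.1 <= after C l.-1 (input_state x) c.2.

Definition no_redundant (n : nat) (C : network) : Prop :=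
  forall l c, 1 <= l <= size C -> c \in layer_at C l -> ~ redundant n C l c.

From mathcomp Require Import all_boot zify.
Set Implicit Arguments. Unset Strict Implicit. Unset Printing Implicit Defensive.

(* Suppose that after layer [l],
   channels [p <= q] are never both 1 on inputs of weight at most [hi], and never both 0 on
   inputs of weight at least [lo], where [lo < hi]. Then a comparator [(p, q)] in layer [l+1]
   is redundant: an input leaving 1 at [p] and 0 at [q] can be moved, one bit at a time and
   by monotonicity without losing that property, to a sorted input of weight in [[lo, hi]];
   but the network fixes sorted inputs.
   In a sorting network the output has a 1 at channel [p] iff [weight y > n - p]. This makes
   every non-adjacent comparator of the last layer redundant; once the last layer consists of
   comparators [(p, p+1)], the same estimate one layer earlier bounds every comparator [(i, j)]
   of the penultimate layer by [j <= i + 1 + [(i, i+1) in L_d] + [(j-1, j) in L_d]]. *)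

Implicit Types (n m k q : nat) (x y : state) (C : network).

Fixpoint weight (n : nat) (x : state) : nat :=
  if n is n'.+1 then weight n' x + x n'.+1 else 0.

Definition hamming (n : nat) (x y : state) : nat := weight n (fun k => x k (+) y k).

Definition set_state (x : state) (q : nat) (b : bool) : state :=
  fun k => if k == q then b else x k.

Definition step_state (m : nat) : state := fun k => m < k.

Lemma eq_weight n x y : (forall k, 1 <= k <= n -> x k = y k) -> weight n x = weight n y.
Proof.
elim: n => [//|n IH] e /=; rewrite IH ?e //; first lia.
by move=> k k_n; apply: e; lia.
Qed.

Lemma weight_le n x : weight n x <= n.
Proof. by elim: n => //= n IH; rewrite -addn1 leq_add // leq_b1. Qed.

Lemma leq_weight n x y : (forall k, 1 <= k <= n -> x k <= y k) -> weight n x <= weight n y.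
Proof.
elim: n => [//|n IH] le /=; apply: leq_add; last by apply: le; lia.
by apply: IH => k k_n; apply: le; lia.
Qed.

Lemma weight_eq0 n x : weight n x = 0 -> forall k, 1 <= k <= n -> ~~ x k.
Proof.
elim: n => [|n IH] /=; first by move=> _ k; lia.
move/eqP; rewrite addn_eq0 eqb0 => /andP[/eqP w0 xm] k k_n.
by case: (ltngtP k n.+1) => [lt||->] //; [apply: IH; lia | lia].
Qed.

Lemma weight_gt0 n x : 0 < weight n x -> exists2 q, 1 <= q <= n & x q.
Proof.
elim: n => [//|n IH] /=; case xm: (x n.+1); first by exists n.+1 => //; lia.
by rewrite addn0 => /IH [q q_n xq]; exists q => //; lia.
Qed.

Lemma weight_set n x q b : 1 <= q <= n -> weight n (set_state x q b) + x q = weight n x + b.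
Proof.
elim: n => [|n IH] q_n /=; first lia.
case: (ltngtP q n.+1) => [lt|gt|eq]; [|lia|].
- have := IH ltac:(lia); rewrite /set_state (_ : (n.+1 == q) = false); lia.
- subst q; rewrite (@eq_weight _ _ x); first by rewrite /set_state eqxx; lia.
  by move=> k k_n; rewrite /set_state; case: eqP; lia.
Qed.

Lemma ltn_weight n x y q : (forall k, 1 <= k <= n -> x k <= y k) ->
  1 <= q <= n -> ~~ x q -> y q -> weight n x < weight n y.
Proof.
move=> le q_n xq yq; have := weight_set x true q_n.
have : weight n (set_state x q true) <= weight n y.
  apply: leq_weight => k k_n; rewrite /set_state.
  by case: eqP => [->|_]; [rewrite yq | apply: le].
rewrite (negbTE xq); lia.
Qed.

Lemma hamming_eq0 n x y : hamming n x y = 0 -> forall k, 1 <= k <= n -> x k = y k.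
Proof. by move=> /weight_eq0 h k /h; case: (x k); case: (y k). Qed.

Lemma hamming_set n x y q : 1 <= q <= n ->
  hamming n (set_state x q (y q)) y + (x q != y q) = hamming n x y.
Proof.
move=> q_n; have := weight_set (fun k => x k (+) y k) false q_n.
rewrite addn0 /hamming => <-; congr (_ + _); last by case: (x q); case: (y q).
by apply: eq_weight => k _; rewrite /set_state; case: eqP => [->|]; rewrite ?addbb.
Qed.

Lemma weight_step n m : weight n (step_state m) = n - m.
Proof. by elim: n => [//|k IH] /=; rewrite IH /step_state; case: (ltnP m k.+1) => /=; lia. Qed.

Lemma leq_state_of_hasPn n x y :
  ~~ has (fun k => x k && ~~ y k) (iota 1 n) -> forall k, 1 <= k <= n -> x k <= y k.
Proof.
move=> /hasPn no_k k k_n; have := no_k k; rewrite mem_iota.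
by move/(_ ltac:(lia)); case: (x k); case: (y k).
Qed.

Lemma exists_flip_toward n x v lo hi :
  lo < hi -> lo <= weight n v <= hi -> 0 < hamming n x v ->
  exists2 q, 1 <= q <= n & (x q != v q) && (if x q then lo < weight n x else weight n x < hi).
Proof.
move=> lo_hi v_win /weight_gt0 [q0 q0_n xv0].
case: (ltnP lo (weight n x)) => [lo_x|x_lo].
- case down: (has (fun k => x k && ~~ v k) (iota 1 n)).
    move/hasP: down => [q]; rewrite mem_iota => q_n /andP[xq vq].
    by exists q; [lia | rewrite xq (negbTE vq)].
  have le := leq_state_of_hasPn (negbT down).
  move: xv0 (le q0 q0_n) (ltn_weight le q0_n).
  case xq0: (x q0); case vq0: (v q0) => // _ _ /(_ isT isT) lt_xv.
  by exists q0; rewrite // xq0 vq0 /=; lia.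
- case up: (has (fun k => v k && ~~ x k) (iota 1 n)).
    move/hasP: up => [q]; rewrite mem_iota => q_n /andP[vq xq].
    by exists q; [lia | rewrite (negbTE xq) vq /=; lia].
  have le := leq_state_of_hasPn (negbT up).
  move: xv0 (le q0 q0_n) (ltn_weight le q0_n).
  by case: (x q0); case: (v q0) => // _ _ /(_ isT isT); lia.
Qed.

Lemma walk_within_window n (P : state -> Prop) lo hi v :
  lo < hi -> lo <= weight n v <= hi ->
  (forall x q, P x -> 1 <= q <= n -> ~~ x q -> weight n x < hi -> P (set_state x q true)) ->
  (forall x q, P x -> 1 <= q <= n -> x q -> lo < weight n x -> P (set_state x q false)) ->
  forall x, P x -> exists2 x', P x' & forall k, 1 <= k <= n -> x' k = v k.
Proof.
move=> lo_hi v_win up down x Px.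
have [d] := ubnP (hamming n x v); elim: d x Px => [//|d IH] x Px hd.
case: (posnP (hamming n x v)) => [/hamming_eq0|]; first by exists x.
case/(exists_flip_toward lo_hi v_win) => q q_n /andP[xv flip].
apply: (IH (set_state x q (v q))); last by have := hamming_set x v q_n; rewrite xv; lia.
move: xv flip; case xq: (x q); case: (v q) => // _ flip.
- exact: down.
- by apply: up; rewrite ?xq.
Qed.

Definition apply_cmps (cs : seq comparator) (x : state) : state :=
  foldl (fun y c => apply_cmp c y) x cs.

Definition on_channels n (cs : seq comparator) : Prop :=
  forall c, c \in cs -> 1 <= c.1 /\ c.1 < c.2 /\ c.2 <= n.

Lemma on_channels_cons n c cs : on_channels n (c :: cs) ->
  1 <= c.1 /\ c.1 < c.2 /\ c.2 <= n /\ on_channels n cs.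
Proof.
move=> on_ccs; have [c1 [c12 c2]] := on_ccs c (mem_head _ _).
by do 3!split=> //; move=> d d_cs; apply: on_ccs; rewrite inE d_cs orbT.
Qed.

Lemma apply_cmp_mono c x y : (forall k, x k <= y k) -> forall k, apply_cmp c x k <= apply_cmp c y k.
Proof.
move=> le k; rewrite /apply_cmp; have := le c.1; have := le c.2.
case: ifP => _; last case: ifP => // _.
all: by case: (x c.1); case: (y c.1); case: (x c.2); case: (y c.2).
Qed.

Lemma apply_cmp_step c m : c.1 < c.2 -> apply_cmp c (step_state m) =1 step_state m.
Proof.
move=> c12 k; rewrite /apply_cmp /step_state.
case: eqP => [->|_]; last case: eqP => [->|_] //; case: (ltnP m c.1) => /=.
all: by [| move=> h; rewrite (ltn_trans h c12)].
Qed.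

Lemma weight_apply_cmp n c x : 1 <= c.1 -> c.1 < c.2 -> c.2 <= n ->
  weight n (apply_cmp c x) = weight n x.
Proof.
move=> c1 c12 c2; set lo := x c.1 && x c.2; set hi := x c.1 || x c.2.
have set1 := @weight_set n x c.1 lo ltac:(lia).
have set2 := @weight_set n (set_state x c.1 lo) c.2 hi ltac:(lia).
have -> : weight n (apply_cmp c x) = weight n (set_state (set_state x c.1 lo) c.2 hi).
  apply: eq_weight => k _; rewrite /apply_cmp /set_state.
  by case: (k =P c.2) => [->|]; [rewrite ifN //; apply/eqP; lia | case: eqP].
move: set2 set1; rewrite /set_state ifN; last by apply/eqP; lia.
by rewrite /lo /hi; case: (x c.1); case: (x c.2) => /=; lia.
Qed.

Lemma apply_cmps_mono cs x y : (forall k, x k <= y k) ->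
  forall k, apply_cmps cs x k <= apply_cmps cs y k.
Proof. by elim: cs x y => [//|c cs IH] x y le /=; apply: IH; apply: apply_cmp_mono. Qed.

Lemma apply_cmps_local n cs x y : on_channels n cs ->
  (forall k, 1 <= k <= n -> x k = y k) ->
  forall k, 1 <= k <= n -> apply_cmps cs x k = apply_cmps cs y k.
Proof.
elim: cs x y => [//|c cs IH] x y /on_channels_cons [c1 [c12 [c2 on_cs]]] e /=.
by apply: IH => // k k_n; rewrite /apply_cmp !e //; lia.
Qed.

Lemma apply_cmps_step n cs m : on_channels n cs -> apply_cmps cs (step_state m) =1 step_state m.
Proof.
have fixes_step x : x =1 step_state m -> on_channels n cs -> apply_cmps cs x =1 step_state m.
  elim: cs x => [//|c cs IH] x e /on_channels_cons [_ [c12 [_ on_cs]]] /=.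
  by apply: IH => // k; rewrite -(apply_cmp_step m c12) /apply_cmp !e.
exact: fixes_step.
Qed.

Lemma weight_apply_cmps n cs x : on_channels n cs -> weight n (apply_cmps cs x) = weight n x.
Proof.
elim: cs x => [//|c cs IH] x /on_channels_cons [c1 [c12 [c2 on_cs]]] /=.
by rewrite IH // weight_apply_cmp.
Qed.

Lemma ordered_of_weight_window n cs p q lo hi : on_channels n cs ->
  1 <= p <= q -> q <= n -> lo < hi -> hi <= n ->
  (forall y, apply_cmps cs y p -> apply_cmps cs y q -> hi < weight n y) ->
  (forall y, ~~ apply_cmps cs y p -> ~~ apply_cmps cs y q -> weight n y < lo) ->
  forall x, apply_cmps cs x p <= apply_cmps cs x q.
Proof.
move=> on_cs p_q q_n lo_hi hi_n both_true both_false x.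
set G := apply_cmps cs.
case Gxp: (G x p) => //; case Gxq: (G x q) => //.
pose P y := G y p && ~~ G y q.
have up y r : P y -> 1 <= r <= n -> ~~ y r -> weight n y < hi -> P (set_state y r true).
  move=> /andP[Gyp _] r_n yr wy; have := @weight_set n y r true r_n; rewrite (negbTE yr) => w.
  have le : forall k, y k <= set_state y r true k.
    by move=> k; rewrite /set_state; case: eqP; case: (y k).
  move: (apply_cmps_mono cs le p); rewrite -/G Gyp lt0b => Gp.
  by rewrite /P Gp /=; apply/negP => /(both_true _ Gp); lia.
have down y r : P y -> 1 <= r <= n -> y r -> lo < weight n y -> P (set_state y r false).
  move=> /andP[_ Gyq] r_n yr wy; have := @weight_set n y r false r_n; rewrite yr => w.
  have le : forall k, set_state y r false k <= y k.
    by move=> k; rewrite /set_state; case: eqP; case: (y k).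
  move: (apply_cmps_mono cs le q); rewrite -/G (negbTE Gyq) leqn0 eqb0 => Gq.
  rewrite /P Gq andbT; apply: contraT => Gp; have := both_false _ Gp Gq; lia.
have v_win : lo <= weight n (step_state (n - lo)) <= hi by rewrite weight_step; lia.
have Px : P x by rewrite /P Gxp Gxq.
have [x' /andP[Gp Gq] agree] := walk_within_window lo_hi v_win up down Px.
have agree_at r : 1 <= r <= n -> G x' r = step_state (n - lo) r.
  move=> r_n; rewrite -(apply_cmps_step (n - lo) on_cs).
  exact: apply_cmps_local on_cs agree r r_n.
by move: Gp Gq; rewrite !agree_at /step_state; lia.
Qed.

Lemma after_flatten C l x : after C l x = apply_cmps (flatten (take l C)) x.
Proof.
by rewrite /after; elim: (take l C) x => //= L Ls IH x; rewrite IH /apply_cmps foldl_cat.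
Qed.

Lemma after_succ C l x : l < size C -> after C l.+1 x = apply_layer (after C l x) (layer_at C l.+1).
Proof. by move=> l_C; rewrite /after (take_nth [::] l_C) foldl_rcons. Qed.

Lemma on_channels_take n C l : valid_network n C -> on_channels n (flatten (take l C)).
Proof. by move=> vC c /flattenP [L /mem_take /vC [on_L _]]; apply: on_L. Qed.

Lemma redundant_of_weight_window n C l p q lo hi : valid_network n C ->
  1 <= p < q -> q <= n -> lo < hi -> hi <= n ->
  (forall y, after C l y p -> after C l y q -> hi < weight n y) ->
  (forall y, ~~ after C l y p -> ~~ after C l y q -> weight n y < lo) ->
  redundant n C l.+1 (p, q).
Proof.
move=> vC p_q q_n lo_hi hi_n both_true both_false x /=; rewrite after_flatten.
apply: (ordered_of_weight_window (on_channels_take (l := l) vC) _ q_n lo_hi hi_n).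
- lia.
- by move=> y; rewrite -!after_flatten; apply: both_true.
- by move=> y; rewrite -!after_flatten; apply: both_false.
Qed.

Definition channels (L : layer) : seq nat := flatten [seq [:: c.1; c.2] | c <- L].

Lemma channels_inv (L : layer) k : k \in channels L -> exists2 c, c \in L & (k = c.1 \/ k = c.2).
Proof. by case/flatten_mapP => c c_L; rewrite !inE => /orP[] /eqP ->; exists c; tauto. Qed.

Lemma apply_layer_notin (L : layer) x k : k \notin channels L -> apply_layer x L k = x k.
Proof.
elim: L x => [//|c L IH] x; rewrite /channels /= !inE !negb_or => /and3P[k1 k2 kL].
by rewrite [apply_layer _ _]/= IH // /apply_cmp (negbTE k1) (negbTE k2).
Qed.

Lemma apply_layer_pair (L : layer) x p q : uniq (channels L) -> (p, q) \in L ->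
  apply_layer x L p = x p && x q /\ apply_layer x L q = x p || x q.
Proof.
elim: L x => [//|c L IH] x; rewrite /channels /= !inE negb_or.
move=> /andP[/andP[c12 c1L] /andP[c2L uL]] /orP[/eqP e|pq_L]; rewrite ![apply_layer _ _]/=.
- subst c; rewrite !(apply_layer_notin _ c1L, apply_layer_notin _ c2L) /apply_cmp /= eqxx.
  by rewrite eq_sym (negbTE c12) eqxx.
- have [-> ->] := IH (apply_cmp c x) uL pq_L.
  have p_L : p \in channels L by apply/flatten_mapP; exists (p, q); rewrite ?inE ?eqxx.
  have q_L : q \in channels L by apply/flatten_mapP; exists (p, q); rewrite ?inE ?eqxx ?orbT.
  have ne a b : a \in channels L -> b \notin channels L -> (a == b) = false.
    by move=> aL; apply: contraNF => /eqP <-.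
  by rewrite /apply_cmp !ne.
Qed.

Lemma sorted_state_step n x : (forall k, 1 <= k < n -> x k <= x k.+1) ->
  forall k, 1 <= k <= n -> x k = (n - weight n x < k).
Proof.
elim: n => [|n IH] sorted_x k k_n /=; first lia.
have IHx := IH (fun k k_n => sorted_x k ltac:(lia)).
have w_n := weight_le n x.
case x_last: (x n.+1) => /=.
- case: (ltnP k n.+1) => [k_le|k_ge]; last by rewrite (_ : k = n.+1) ?x_last; lia.
  by rewrite IHx; lia.
- have w0 : weight n x = 0.
    case: n {IH} sorted_x IHx k_n w_n x_last => [|n] sorted_x IHx _ _ x_last; first by [].
    have := sorted_x n.+1 ltac:(lia); rewrite x_last IHx; lia.
  case: (ltnP k n.+1) => [k_le|k_ge]; last by rewrite (_ : k = n.+1) ?x_last; lia.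
  by rewrite IHx; lia.
Qed.

Lemma after_local n C l x y : valid_network n C -> (forall k, 1 <= k <= n -> x k = y k) ->
  forall k, 1 <= k <= n -> after C l x k = after C l y k.
Proof.
move=> vC e k k_n; rewrite !after_flatten.
exact: (apply_cmps_local (on_channels_take (l := l) vC)).
Qed.

Section SortingNetwork.
Variables (n : nat) (C : network).
Hypotheses (vC : valid_network n C) (sortC : is_sorting_network n C).

Lemma output_sorted y k : 1 <= k < n -> output C y k <= output C y k.+1.
Proof.
move=> k_n; pose t := @Tuple n bool (mkseq (fun i => y i.+1) n) (introT eqP (size_mkseq _ _)).
have t_y k' : 1 <= k' <= n -> input_state t k' = y k'.
  by move=> k'_n; rewrite /input_state /= nth_mkseq; [congr y | ]; lia.
by rewrite /output -!(after_local _ vC t_y); [apply: sortC | ..]; lia.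
Qed.

Lemma output_step y p : 1 <= p <= n -> output C y p = (n - weight n y < p).
Proof.
move=> p_n; rewrite (sorted_state_step (output_sorted y)) // /output after_flatten.
by rewrite weight_apply_cmps //; apply: on_channels_take.
Qed.

End SortingNetwork.

Section LastLayers.
Variables (n : nat) (C : network).
Hypotheses (vC : valid_network n C) (depthC : 2 <= size C).
Hypotheses (sortC : is_sorting_network n C) (nonredC : no_redundant n C).

Let d := size C.
Let L_d := layer_at C d.

Lemma valid_layer_at l : 1 <= l <= d -> valid_layer n (layer_at C l).
Proof. by move=> l_d; apply/vC/mem_nth; case: l l_d. Qed.

Lemma output_last_layer y : output C y = apply_layer (after C d.-1 y) L_d.
Proof. by rewrite /output -/d -after_succ; [congr after | ]; lia. Qed.

Lemma last_layer_adjacent p q : (p, q) \in L_d -> q = p.+1.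
Proof.
move=> pq_L; have [/(_ _ pq_L) /= [p1 [p_q q_n]] uniq_L] := valid_layer_at (l := d) ltac:(lia).
have pair y := apply_layer_pair (after C d.-1 y) uniq_L pq_L.
apply/eqP; apply: contraT => q_far; case: (nonredC _ pq_L); first lia.
rewrite (_ : d = d.-1.+1); last lia.
apply: (@redundant_of_weight_window _ _ _ _ _ (n.+1 - q) (n - p) vC); try lia.
- move=> y yp yq; have := output_step vC sortC y (p := p) ltac:(lia).
  by rewrite output_last_layer (pair y).1 yp yq; lia.
- move=> y yp yq; have := output_step vC sortC y (p := q) ltac:(lia).
  by rewrite output_last_layer (pair y).2 (negbTE yp) (negbTE yq); lia.
Qed.

Lemma penultimate_true_weight y p : 1 <= p <= n -> after C d.-1 y p ->
  n.+1 - p - ((p, p.+1) \in L_d) <= weight n y.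
Proof.
move=> p_n yp; have [on_L uniq_L] := valid_layer_at (l := d) ltac:(lia).
have out_p r : 1 <= r <= n -> output C y r -> n.+1 - r <= weight n y.
  by move=> r_n; rewrite (output_step vC sortC) //; lia.
case: (boolP (p \in channels L_d)) => [/channels_inv [[a b] ab_L /= [pa|pb]]|p_free].
- subst a; have b_p := last_layer_adjacent ab_L; subst b.
  have [_ [_ /= p1_n]] := on_L _ ab_L; rewrite ab_L.
  have := out_p p.+1 ltac:(lia); rewrite output_last_layer (apply_layer_pair _ uniq_L ab_L).2 yp.
  by move/(_ isT); lia.
- subst b; have := out_p p p_n.
  by rewrite output_last_layer (apply_layer_pair _ uniq_L ab_L).2 yp orbT => /(_ isT); lia.
- by have := out_p p p_n; rewrite output_last_layer apply_layer_notin // yp => /(_ isT); lia.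
Qed.

Lemma penultimate_false_weight y q : 1 <= q <= n -> ~~ after C d.-1 y q ->
  weight n y <= n - q + ((q.-1, q) \in L_d).
Proof.
move=> q_n yq; have [on_L uniq_L] := valid_layer_at (l := d) ltac:(lia).
have out_q r : 1 <= r <= n -> ~~ output C y r -> weight n y <= n - r.
  by move=> r_n; rewrite (output_step vC sortC) //; lia.
case: (boolP (q \in channels L_d)) => [/channels_inv [[a b] ab_L /= [qa|qb]]|q_free].
- subst a; have := out_q q q_n; rewrite output_last_layer (apply_layer_pair _ uniq_L ab_L).1.
  by rewrite (negbTE yq) => /(_ isT); lia.
- subst b; have b_a := last_layer_adjacent ab_L; subst q.
  have [/= a1 _] := on_L _ ab_L; rewrite /= ab_L.
  have := out_q a ltac:(lia); rewrite output_last_layer (apply_layer_pair _ uniq_L ab_L).1.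
  by rewrite (negbTE yq) andbF => /(_ isT); lia.
- have := out_q q q_n; rewrite output_last_layer apply_layer_notin //.
  by rewrite yq => /(_ isT); lia.
Qed.

Lemma penultimate_span i j : (i, j) \in layer_at C d.-1 ->
  j <= i.+1 + ((i, i.+1) \in L_d) + ((j.-1, j) \in L_d).
Proof.
move=> ij_L; have [/(_ _ ij_L) /= [i1 [i_j j_n]] uniq_L] := valid_layer_at (l := d.-1) ltac:(lia).
have d_pred : d.-1 = d.-2.+1 by lia.
have pair y : after C d.-1 y i = after C d.-2 y i && after C d.-2 y j /\
              after C d.-1 y j = after C d.-2 y i || after C d.-2 y j.
  by rewrite d_pred after_succ -?d_pred; [apply: apply_layer_pair | lia].
set bi := (i, i.+1) \in L_d; set bj := (j.-1, j) \in L_d.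
rewrite leqNgt; apply/negP => j_far; case: (nonredC _ ij_L); first lia.
rewrite d_pred; apply: (@redundant_of_weight_window _ _ _ _ _ (n.+1 - j + bj) (n - i - bi) vC).
all: try lia.
- move=> y yi yj; have := penultimate_true_weight (y := y) (p := i) ltac:(lia).
  by rewrite (pair y).1 yi yj -/bi => /(_ isT); lia.
- move=> y yi yj; have := penultimate_false_weight (y := y) (q := j) ltac:(lia).
  by rewrite (pair y).2 (negbTE yi) (negbTE yj) -/bj => /(_ isT); lia.
Qed.

End LastLayers.

Lemma span_cases i j (a b : bool) : j <= i.+1 + a + b ->
  [/\ j - i <= 3, j = i.+2 -> a || b & j = i.+3 -> a && b].
Proof. by case: a; case: b => /=; split=> //; lia. Qed.

Theorem corollary2 (n : nat) (C : network) :
  valid_network n C -> 2 <= size C ->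
  is_sorting_network n C -> no_redundant n C ->
  forall i j, (i, j) \in layer_at C (size C).-1 ->
    j - i <= 3 /\
    (j = i + 2 -> (i, i + 1) \in layer_at C (size C) \/ (i + 1, i + 2) \in layer_at C (size C)) /\
    (j = i + 3 -> (i, i + 1) \in layer_at C (size C) /\ (i + 2, i + 3) \in layer_at C (size C)).
Proof.
move=> vC depthC sortC nonredC i j ij_L.
have [span3 span_i2 span_i3] := span_cases (penultimate_span vC depthC sortC nonredC ij_L).
rewrite addn1 addn2 addn3; split=> //; split=> j_i; subst j.
- by apply/orP; exact: span_i2.
- by apply/andP; exact: span_i3.
Qed.
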